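(* Let $1\le r\le s\le t$ and let $u=ABCd$, $v=A'B'C'd'$ be vertices of $E3C(r,s,t)$ with $A\ne A'$, $B\ne B'$, $C\ne C'$ and $d\ne d'$. Then there exist $2r+2$ pairwise internally disjoint $u$–$v$ paths in $E3C(r,s,t)$, each of length at most $r+s+t+6$.
   Context: The exchanged 3-ary $n$-cube $E3C(r,s,t)$ ($r,s,t\ge1$, $n=r+s+t+1$): vertices are strings written $x=ABCd$ with $A\in\{0,1,2\}^r$, $B\in\{0,1,2\}^s$, $C\in\{0,1,2\}^t$, $d\in\{0,1,2\}$. Two distinct vertices $x=ABCd$, $y=A'B'C'd'$ are adjacent iff one of: (E0) $A=A',B=B',C=C'$ and $d\ne d'$; (E1) $d=d'=0$, $A=A'$, $B=B'$ and $C,C'$ differ in exactly one position; (E2) $d=d'=1$, $A=A'$, $C=C'$ and $B,B'$ differ in exactly one position; (E3) $d=d'=2$, $B=B'$, $C=C'$ and $A,A'$ differ in exactly one position. Paths are internally disjoint if they share no vertices other than their endpoints; length = number of edges. *)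

From mathcomp Require Import all_boot.
Set Implicit Arguments. Unset Strict Implicit. Unset Printing Implicit Defensive.

Definition word (k : nat) := k.-tuple 'I_3.
Definition vertex (r s t : nat) : Type := (word r * word s * word t * 'I_3)%type.

Definition vA r s t (x : vertex r s t) : word r := x.1.1.1.
Definition vB r s t (x : vertex r s t) : word s := x.1.1.2.
Definition vC r s t (x : vertex r s t) : word t := x.1.2.
Definition vd r s t (x : vertex r s t) : 'I_3 := x.2.

Definition hamming k (X Y : word k) : nat :=
  count (fun p => p.1 != p.2) (zip (tval X) (tval Y)).

Definition differ_one k (X Y : word k) : bool := hamming X Y == 1.

Definition e3c_adj r s t (x y : vertex r s t) : bool :=
  [|| [&& vA x == vA y, vB x == vB y, vC x == vC y & vd x != vd y],
      [&& vd x == 0 :> nat, vd y == 0 :> nat, vA x == vA y, vB x == vB y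
          & differ_one (vC x) (vC y)],
      [&& vd x == 1 :> nat, vd y == 1 :> nat, vA x == vA y, vC x == vC y
          & differ_one (vB x) (vB y)]
    | [&& vd x == 2 :> nat, vd y == 2 :> nat, vB x == vB y, vC x == vC y
          & differ_one (vA x) (vA y)]].

Definition is_path r s t (u v : vertex r s t) (p : seq (vertex r s t)) : Prop :=
  [/\ p != [::], head u p = u, last u p = v, uniq p & path (@e3c_adj r s t) u (behead p)].

Definition path_length T (p : seq T) : nat := (size p).-1.

Definition interior T (p : seq T) : seq T := drop 1 (take (size p).-1 p).

Definition int_disjoint (T : eqType) (p q : seq T) : bool :=
  all (fun x => x \notin interior q) (interior p).

(* Let a and b be the levels of u and v, c the third level, and P, Q, R (resp. P', Q', R')
   the blocks of u (resp. v) that change at levels a, b, c; they all have length at least r.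
   A route alternates level changes with Hamming walks that correct one block letter by
   letter.  Two routes correct the blocks in the orders Q, P, R and R, Q, P.  The other 2r
   routes first step at level a to one of 2r distinct Hamming neighbours P_i of P, then walk
   Q not to Q' but to a neighbour Q'_i of Q', which only the final step into v corrects; the
   coordinates P_i and Q'_i keep these routes apart from each other and from the first two.
   Every route makes at most |P| + |Q| + |R| corrections and 6 further steps.  The routes
   are built in a normal form where u and v sit at levels 0 and 1, and transported to
   E3C(r,s,t) by an injective, adjacency-preserving relabelling. *)

From mathcomp Require Import all_boot zify.
Set Implicit Arguments. Unset Strict Implicit. Unset Printing Implicit Defensive.

(** * Hamming walks on words *)

Definition hdist (X Y : seq 'I_3) : nat :=
  count (fun p : 'I_3 * 'I_3 => p.1 != p.2) (zip X Y).

Lemma hdist_cons x y X Y : hdist (x :: X) (y :: Y) = (x != y) + hdist X Y.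
Proof. by []. Qed.

Lemma hdistxx X : hdist X X = 0.
Proof. by elim: X => //= x X IH; rewrite hdist_cons eqxx IH. Qed.

Lemma hdistC X Y : hdist X Y = hdist Y X.
Proof. by elim: X Y => [|x X IH] [|y Y] //; rewrite !hdist_cons IH eq_sym. Qed.

Lemma hdist_set_nth W k w :
  k < size W -> hdist W (set_nth ord0 W k w) = (nth ord0 W k != w).
Proof.
elim: W k => [|x W IH] [|k] //= lt_k; first by rewrite hdist_cons hdistxx addn0.
by rewrite hdist_cons eqxx IH.
Qed.

Definition hadj (X Y : seq 'I_3) : bool := hdist X Y == 1.

Lemma hadjC X Y : hadj X Y = hadj Y X.
Proof. by rewrite /hadj hdistC. Qed.

Fixpoint hwalk (X Y : seq 'I_3) : seq (seq 'I_3) :=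
  match X, Y with
  | x :: X', y :: Y' =>
      let w := map (cons y) (hwalk X' Y') in
      if x == y then w else (x :: X') :: w
  | _, _ => [:: X]
  end.

Lemma hwalkE X Y : hwalk X Y = X :: behead (hwalk X Y).
Proof.
elim: X Y => [|x X IH] [|y Y] //=; rewrite [hwalk X Y]IH /=.
by case: eqP => [->|].
Qed.

Lemma last_hwalk X Y : size X = size Y -> last X (hwalk X Y) = Y.
Proof.
elim: X Y => [|x X IH] [|y Y] //= [/IH]; rewrite hwalkE /= => eq_last.
by case: eqP => [->|_] /=; rewrite last_map eq_last.
Qed.

Lemma hwalk_sorted X Y : sorted hadj (hwalk X Y).
Proof.
elim: X Y => [|x X IH] [|y Y] //=.
have sorted_tail : sorted hadj (map (cons y) (hwalk X Y)).
  by rewrite sorted_map; apply: sub_sorted (IH Y) => W W'; rewrite /hadj /= hdist_cons eqxx.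
case: eqP => [//|/eqP neq_xy].
rewrite hwalkE /= in sorted_tail *.
by rewrite sorted_tail /hadj hdist_cons hdistxx neq_xy.
Qed.

Lemma hwalk_uniq X Y : uniq (hwalk X Y).
Proof.
elim: X Y => [|x X IH] [|y Y] //=.
have uniq_tail : uniq (map (cons y) (hwalk X Y)) by rewrite map_inj_uniq // => ? ? [].
case: eqP => [//|/eqP neq_xy] /=; rewrite uniq_tail andbT.
by apply/mapP => -[W _ [eq_xy _]]; rewrite eq_xy eqxx in neq_xy.
Qed.

Lemma size_hwalk X Y : size (hwalk X Y) <= (size X).+1.
Proof.
elim: X Y => [|x X IH] [|y Y] //=.
by case: eqP => _ /=; rewrite size_map; move: (IH Y); lia.
Qed.

Lemma size_mem_hwalk X Y W : W \in hwalk X Y -> size W = size X.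
Proof.
elim: X Y W => [|x X IH] [|y Y] W //=; try by rewrite inE => /eqP ->.
have in_tail : W \in map (cons y) (hwalk X Y) -> size W = (size X).+1.
  by case/mapP => W' /IH /= <- ->.
by case: eqP => _ //; rewrite inE => /predU1P [->|] // /in_tail.
Qed.

Definition other (x : 'I_3) (b : bool) : 'I_3 := inord ((x + 1 + b) %% 3).

Lemma other_neq x b : other x b != x.
Proof.
apply/eqP => /(congr1 val); rewrite /= inordK; last by rewrite ltn_mod.
by move: (ltn_ord x); case: b => /=; lia.
Qed.

Lemma other_inj x : injective (other x).
Proof.
move=> b b' /(congr1 val); rewrite /= !inordK ?ltn_mod //.
by move: (ltn_ord x); case: b; case: b' => //=; lia.
Qed.

Definition nbr (W : seq 'I_3) (i : nat) : seq 'I_3 :=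
  set_nth ord0 W i./2 (other (nth ord0 W i./2) (odd i)).

Section Neighbours.
Variable W : seq 'I_3.

Lemma size_nbr i : i./2 < size W -> size (nbr W i) = size W.
Proof. by move=> lt_i; rewrite size_set_nth; apply/maxn_idPr. Qed.

Lemma hadj_nbr i : i./2 < size W -> hadj W (nbr W i).
Proof. by move=> lt_i; rewrite /hadj hdist_set_nth // (eq_sym (nth _ _ _)) other_neq. Qed.

Lemma nbr_neq i : i./2 < size W -> nbr W i <> W.
Proof. by move/hadj_nbr => + eq_W; rewrite eq_W /hadj hdistxx. Qed.

Lemma nbr_inj i j : i./2 < size W -> j./2 < size W -> nbr W i = nbr W j -> i = j.
Proof.
move=> lt_i lt_j /(congr1 (nth ord0 ^~ i./2)); rewrite !nth_set_nth /= eqxx.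
case: eqP => [eq_half|_ eq_other].
  rewrite eq_half => /other_inj eq_odd.
  by rewrite -[i]odd_double_half -[j]odd_double_half eq_half eq_odd.
by move: (other_neq (nth ord0 W i./2) (odd i)); rewrite eq_other eqxx.
Qed.

End Neighbours.

Lemma mem_interior (T : eqType) (p : seq T) x : x \in interior p -> x \in p.
Proof. by rewrite /interior => /mem_drop /mem_take. Qed.

Lemma interior_map (T T' : Type) (f : T -> T') p : interior (map f p) = map f (interior p).
Proof. by rewrite /interior map_drop map_take size_map. Qed.

Lemma interior_ends (T : Type) (x y : T) b : interior (x :: b ++ [:: y]) = b.
Proof.
rewrite /interior -cat_cons size_cat addn1 /= take_cat ltnn subnn take0 cats0.
exact: drop0.
Qed.

Lemma int_disjointC (T : eqType) (p q : seq T) : int_disjoint p q = int_disjoint q p.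
Proof. by apply/allP/allP => disj x xq; apply: contraL xq => /disj. Qed.

Lemma int_disjoint_map (T T' : eqType) (f : T -> T') (D : pred T) p q :
  {in D &, injective f} -> all D p -> all D q -> int_disjoint p q ->
  int_disjoint (map f p) (map f q).
Proof.
move=> f_inj /allP Dp /allP Dq /allP disj; rewrite /int_disjoint !interior_map.
apply/allP => _ /mapP [x xp ->]; apply/mapP => -[y yq eq_f].
have eq_xy : x = y by apply: f_inj eq_f; [apply/Dp/mem_interior | apply/Dq/mem_interior].
by move: (disj x xp); rewrite eq_xy yq.
Qed.

(** * Routes in a normal form of the cube *)

(* [(P, Q, R, l)] is a vertex at relative level [l < 3] whose blocks changed at relative
   levels 0, 1, 2 are [P], [Q], [R]; [emb] below sends relative levels 0 and 1 to the
   levels of the two endpoints. *)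
Definition nvertex := (seq 'I_3 * seq 'I_3 * seq 'I_3 * nat)%type.

Definition nadj (x y : nvertex) : bool :=
  [|| [&& x.1 == y.1, x.2 != y.2, x.2 < 3 & y.2 < 3],
      [&& x.2 == 0, y.2 == 0, x.1.1.2 == y.1.1.2, x.1.2 == y.1.2 & hadj x.1.1.1 y.1.1.1],
      [&& x.2 == 1, y.2 == 1, x.1.1.1 == y.1.1.1, x.1.2 == y.1.2 & hadj x.1.1.2 y.1.1.2]
    | [&& x.2 == 2, y.2 == 2, x.1.1.1 == y.1.1.1, x.1.1.2 == y.1.1.2 & hadj x.1.2 y.1.2]].

Definition shaped (n1 n2 n3 : nat) (x : nvertex) : bool :=
  [&& size x.1.1.1 == n1, size x.1.1.2 == n2, size x.1.2 == n3 & x.2 < 3].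

Lemma walk_path (f : seq 'I_3 -> nvertex) X Y x rest :
  size X = size Y -> {homo f : W W' / hadj W W' >-> nadj W W'} ->
  nadj x (f X) -> path nadj (f Y) rest -> path nadj x (map f (hwalk X Y) ++ rest).
Proof.
move=> eq_size f_adj x_adj rest_path.
move: (hwalk_sorted X Y) (last_hwalk eq_size); rewrite hwalkE /= => sorted_w last_w.
rewrite x_adj cat_path last_map last_w rest_path andbT.
exact: homo_path sorted_w.
Qed.

Lemma all_hwalk (p : pred (seq 'I_3)) X Y :
  (forall W, size W = size X -> p W) -> all p (hwalk X Y).
Proof. by move=> pW; apply/allP => W /size_mem_hwalk /pW. Qed.

Ltac split_mem := repeat match goal with
  | H : is_true (_ \in _ ++ _) |- _ => rewrite mem_cat in H
  | H : is_true (_ \in _ :: _) |- _ => rewrite inE in H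
  | H : is_true (_ || _) |- _ => case/orP: H => H
  | H : is_true (_ \in map _ _) |- _ => let W := fresh "W" in case/mapP: H => W _ H
  | H : is_true (_ == _) |- _ => move/eqP: H => H
  end.

(* Two route vertices can only coincide if a coordinate equation contradicts a hypothesis
   such as [R <> R'] or [nbr P i <> P]. *)
Ltac by_coordinates := split_mem; subst; congruence.

Ltac distinct_vertices :=
  rewrite -?catA ?cat_cons ?cons_uniq ?cat_uniq;
  repeat match goal with
  | |- is_true (_ && _) => apply/andP; split
  | |- is_true (uniq (map _ (hwalk _ _))) =>
      rewrite map_inj_uniq ?hwalk_uniq // => ? ? ?; congruence
  | |- is_true (uniq [:: _]) => by []
  | |- is_true (~~ has _ _) => apply/hasPn => ? ?; apply/negP => ?; by_coordinates
  | |- is_true (_ \notin _) => apply/negP => ?; by_coordinates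
  end.

Ltac walk_adj :=
  by [rewrite /nadj /= !eqxx | move=> W W'; rewrite /nadj /= !eqxx => ->; rewrite !orbT].

Section Routes.
Variables P Q R P' Q' R' : seq 'I_3.

Definition ends (b : seq nvertex) : seq nvertex := (P, Q, R, 0) :: b ++ [:: (P', Q', R', 1)].

Definition good_route (b : seq nvertex) : Prop :=
  [/\ path nadj (P, Q, R, 0) (b ++ [:: (P', Q', R', 1)]), uniq (ends b),
      all (shaped (size P) (size Q) (size R)) (ends b)
    & size b <= size P + size Q + size R + 5].

Definition route_QPR : seq nvertex :=
  map (fun W => (P, W, R, 1)) (hwalk Q Q') ++
  map (fun W => (W, Q', R, 0)) (hwalk P P') ++
  map (fun W => (P', Q', W, 2)) (hwalk R R').

Definition route_RQP : seq nvertex :=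
  map (fun W => (P, Q, W, 2)) (hwalk R R') ++
  map (fun W => (P, W, R', 1)) (hwalk Q Q') ++
  map (fun W => (W, Q', R', 0)) (hwalk P P').

Definition route_nbr (i : nat) : seq nvertex :=
  (nbr P i, Q, R, 0) ::
  map (fun W => (nbr P i, W, R, 1)) (hwalk Q (nbr Q' i)) ++
  map (fun W => (nbr P i, nbr Q' i, W, 2)) (hwalk R R') ++
  map (fun W => (W, nbr Q' i, R', 0)) (hwalk (nbr P i) P') ++
  [:: (P', nbr Q' i, R', 1)].

Definition route (m i : nat) : seq nvertex :=
  if i < m.*2 then route_nbr i else if i == m.*2 then route_QPR else route_RQP.

Hypotheses (sP : size P = size P') (sQ : size Q = size Q') (sR : size R = size R').
Hypotheses (nP : P <> P') (nQ : Q <> Q') (nR : R <> R').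

Ltac shape_route :=
  rewrite /ends -?catA ?cat_cons /= !all_cat /= !all_map /shaped /=;
  repeat (apply/andP; split); try (apply: all_hwalk => W /= ->);
  by rewrite ?size_nbr // -?sP -?sQ -?sR ?eqxx.

Lemma good_route_QPR : good_route route_QPR.
Proof.
split.
- rewrite /route_QPR -!catA.
  by do 3![apply: walk_path => //; try walk_adj].
- by rewrite /ends /route_QPR; distinct_vertices.
- by rewrite /ends /route_QPR; shape_route.
- rewrite /route_QPR !size_cat !size_map.
  by move: (size_hwalk Q Q') (size_hwalk P P') (size_hwalk R R'); lia.
Qed.

Lemma good_route_RQP : good_route route_RQP.
Proof.
split.
- rewrite /route_RQP -!catA.
  by do 3![apply: walk_path => //; try walk_adj].
- by rewrite /ends /route_RQP; distinct_vertices.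
- by rewrite /ends /route_RQP; shape_route.
- rewrite /route_RQP !size_cat !size_map.
  by move: (size_hwalk Q Q') (size_hwalk P P') (size_hwalk R R'); lia.
Qed.

Lemma good_route_nbr i : i./2 < size P -> i./2 < size Q' -> good_route (route_nbr i).
Proof.
move=> ltP ltQ; have nPi := nbr_neq ltP; have nQi := nbr_neq ltQ.
have sPi := size_nbr ltP; have sQi := size_nbr ltQ.
split.
- rewrite /route_nbr /= {1}/nadj /= !eqxx hadj_nbr // orbT /= -!catA.
  apply: walk_path; [by rewrite sQi | walk_adj | walk_adj |].
  apply: walk_path => //; try walk_adj.
  apply: walk_path; [by rewrite sPi | walk_adj | walk_adj |].
  by rewrite /= /nadj /= !eqxx hadjC hadj_nbr // !orbT.
- by rewrite /ends /route_nbr; distinct_vertices.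
- by rewrite /ends /route_nbr; shape_route.
- rewrite /route_nbr /= !size_cat !size_map /=.
  move: (size_hwalk Q (nbr Q' i)) (size_hwalk R R') (size_hwalk (nbr P i) P').
  by rewrite sPi; lia.
Qed.

Variable m : nat.
Hypotheses (mP : m <= size P) (mQ : m <= size Q).

Let half_lt k : k < m.*2 -> k./2 < size P /\ k./2 < size Q'.
Proof. by move: mP mQ; rewrite sQ; lia. Qed.

Lemma good_route_route i : good_route (route m i).
Proof.
rewrite /route; case: ifP => [/half_lt [ltP ltQ]|_]; first exact: good_route_nbr.
by case: ifP => _; [exact: good_route_QPR | exact: good_route_RQP].
Qed.

Ltac disjoint_routes := apply/allP => ? ?; apply/negP => ?; by_coordinates.

Lemma route_disjoint i j : i < m.*2.+2 -> j < m.*2.+2 -> i != j ->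
  int_disjoint (ends (route m i)) (ends (route m j)).
Proof.
wlog lt_ij : i j / i < j => [gen lt_i lt_j|_ lt_j _].
  case: (ltngtP i j) => [lt_ij|lt_ji|] // _.
    by apply: gen; rewrite // neq_ltn lt_ij.
  by rewrite int_disjointC; apply: gen; rewrite // neq_ltn lt_ji.
rewrite /int_disjoint !interior_ends /route /route_nbr /route_QPR /route_RQP.
case: (ltnP i m.*2) => [lt_i|ge_i]; last first.
  have [-> ->] : i = m.*2 /\ j = m.*2.+1 by move: ge_i lt_ij lt_j; lia.
  by rewrite eqxx ltnNge leqnSn (gtn_eqF (ltnSn _)) /=; disjoint_routes.
have [ltP ltQ] := half_lt lt_i; have nPi := nbr_neq ltP; have nQi := nbr_neq ltQ.
case: ifP => [lt_j'|_]; last by case: ifP => _; disjoint_routes.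
have [ltP' ltQ'] := half_lt lt_j'; have nPj := nbr_neq ltP'; have nQj := nbr_neq ltQ'.
have ne_ij : i <> j by move=> eq_ij; rewrite eq_ij ltnn in lt_ij.
have nPij : nbr P i <> nbr P j by move/(nbr_inj ltP ltP').
have nQij : nbr Q' i <> nbr Q' j by move/(nbr_inj ltQ ltQ').
disjoint_routes.
Qed.

End Routes.

(** * Transport to E3C(r,s,t) *)

Section Blocks.
Variables r s t : nat.
Implicit Types x y : vertex r s t.

Definition blen (k : nat) : nat := if k == 0 then t else if k == 1 then s else r.

(* The block of [x] that changes at level [k]. *)
Definition block x (k : nat) : seq 'I_3 :=
  if k == 0 then val (vC x) else if k == 1 then val (vB x) else val (vA x).

Lemma size_block x k : size (block x k) = blen k.
Proof. by rewrite /block /blen; case: ifP => _; [|case: ifP => _]; rewrite size_tuple. Qed.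

Lemma blen_ge k : r <= s -> s <= t -> r <= blen k.
Proof. by rewrite /blen => le_rs le_st; case: ifP => _; [|case: ifP => _]; lia. Qed.

Lemma blocks_eq x y : (forall k, k < 3 -> block x k = block y k) ->
  [/\ vA x = vA y, vB x = vB y & vC x = vC y].
Proof.
by move=> eq_xy; split; apply: val_inj; [exact: (eq_xy 2) | exact: (eq_xy 1) | exact: (eq_xy 0)].
Qed.

Lemma vertexP x y : (forall k, k < 3 -> block x k = block y k) -> vd x = vd y -> x = y.
Proof.
move=> /blocks_eq [eqA eqB eqC] eqd.
case: x y eqA eqB eqC eqd => [[[A B] C] d] [[[A' B'] C'] d'].
by rewrite /vA /vB /vC /vd /= => -> -> -> ->.
Qed.

Lemma e3c_adj_level x y :
  (forall k, k < 3 -> block x k = block y k) -> vd x != vd y -> e3c_adj x y.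
Proof. by move=> /blocks_eq [eqA eqB eqC] ne_d; rewrite /e3c_adj eqA eqB eqC !eqxx ne_d. Qed.

Lemma e3c_adj_block x y k : vd x = k :> nat -> vd y = k :> nat ->
  (forall j, j < 3 -> j != k -> block x j = block y j) -> hadj (block x k) (block y k) ->
  e3c_adj x y.
Proof.
move=> dx dy; have lt_k : k < 3 by rewrite -dx.
rewrite /e3c_adj /differ_one /hamming dx dy.
case: k lt_k {dx dy} => [|[|[|]]] // _ eq_off; rewrite /hadj /hdist /= => ->.
- have eqA : vA x = vA y := val_inj (eq_off 2 erefl erefl).
  have eqB : vB x = vB y := val_inj (eq_off 1 erefl erefl).
  by rewrite eqA eqB !eqxx orbT.
- have eqA : vA x = vA y := val_inj (eq_off 2 erefl erefl).
  have eqC : vC x = vC y := val_inj (eq_off 0 erefl erefl).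
  by rewrite eqA eqC !eqxx !orbT.
- have eqB : vB x = vB y := val_inj (eq_off 1 erefl erefl).
  have eqC : vC x = vC y := val_inj (eq_off 0 erefl erefl).
  by rewrite eqB eqC !eqxx !orbT.
Qed.

End Blocks.

Section Embedding.
Variables r s t a b : nat.
Hypotheses (a3 : a < 3) (b3 : b < 3) (ab : a != b).
Local Notation c := (3 - a - b).

Lemma third_level :
  [/\ c < 3, c != a, c != b & forall k, k < 3 -> [|| k == a, k == b | k == c]].
Proof.
by case: a a3 ab => [|[|[|]]] // _; case: b b3 => [|[|[|]]] //= _ _; split => // -[|[|[|]]].
Qed.

Lemma blen_sum : blen r s t a + blen r s t b + blen r s t c = r + s + t.
Proof. by rewrite /blen; case: a a3 ab => [|[|[|]]] // _; case: b b3 => [|[|[|]]] //= _ _; lia. Qed.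

Definition level (l : nat) : nat := if l == 0 then a else if l == 1 then b else c.

Lemma level_lt l : level l < 3.
Proof. by case: third_level => c3 _ _ _; rewrite /level; case: ifP => _; [|case: ifP]. Qed.

Lemma level_inj l l' : l < 3 -> l' < 3 -> level l = level l' -> l = l'.
Proof.
rewrite /level; case: a a3 ab => [|[|[|]]] // _; case: b b3 => [|[|[|]]] //= _ _;
  by case: l => [|[|[|]]] //; case: l' => [|[|[|]]].
Qed.

Definition comp (x : nvertex) (k : nat) : seq 'I_3 :=
  if k == a then x.1.1.1 else if k == b then x.1.1.2 else x.1.2.

Lemma compE x : [/\ comp x a = x.1.1.1, comp x b = x.1.1.2 & comp x c = x.1.2].
Proof.
case: third_level => _ ca cb _.
by rewrite /comp eqxx eq_sym (negbTE ab) eqxx (negbTE ca) (negbTE cb).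
Qed.

(* Junk value [nseq n 0] when [size W != n]; [emb] is only used on [fits] vertices. *)
Definition tup n (W : seq 'I_3) : word n := insubd (nseq_tuple n ord0) W.

Definition emb (x : nvertex) : vertex r s t :=
  (tup r (comp x 2), tup s (comp x 1), tup t (comp x 0), inord (level x.2)).

Local Notation fits := (shaped (blen r s t a) (blen r s t b) (blen r s t c)).

Lemma size_comp x k : fits x -> k < 3 -> size (comp x k) = blen r s t k.
Proof.
move=> /and4P [/eqP sa /eqP sb /eqP sc _] lt_k.
case: third_level => _ _ _ /(_ k lt_k) /or3P.
by case: (compE x) => ea eb ec; case=> /eqP ->; rewrite ?ea ?eb ?ec.
Qed.

Lemma block_emb x k : fits x -> k < 3 -> block (emb x) k = comp x k.
Proof.
move=> fx lt_k; move: (size_comp fx lt_k).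
by case: k lt_k => [|[|[|]]] // _ sk; rewrite /block /= insubdK // unfold_in /= sk.
Qed.

Lemma vd_emb x : vd (emb x) = level x.2 :> nat.
Proof. by rewrite /= inordK // level_lt. Qed.

Lemma eq_comp x y j : j < 3 -> (j == a -> x.1.1.1 = y.1.1.1) ->
  (j == b -> x.1.1.2 = y.1.1.2) -> (j == c -> x.1.2 = y.1.2) -> comp x j = comp y j.
Proof.
move=> j3 eqa eqb eqc; have [_ _ _ /(_ j j3) /or3P] := third_level.
have [xa xb xc] := compE x; have [ya yb yc] := compE y.
by case=> ej; rewrite (eqP ej) ?xa ?ya ?eqa ?xb ?yb ?eqb ?xc ?yc ?eqc.
Qed.

Lemma emb_inj : {in fits &, injective emb}.
Proof.
move=> x y fx fy eq_xy.
have eq_comp k : k < 3 -> comp x k = comp y k.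
  by move=> lt_k; rewrite -!block_emb // eq_xy.
have eq_level : x.2 = y.2.
  have [/and4P [_ _ _ x3] /and4P [_ _ _ y3]] := conj fx fy.
  by apply: level_inj x3 y3 _; rewrite -!vd_emb eq_xy.
case: third_level => c3 _ _ _; move: (eq_comp a a3) (eq_comp b b3) (eq_comp c c3).
case: (compE x) (compE y) => -> -> -> [-> -> ->].
by case: x y eq_level {fx fy eq_xy eq_comp} => [[[? ?] ?] ?] [[[? ?] ?] ?] /= -> -> -> ->.
Qed.

Lemma emb_adj : {in fits &, {homo emb : x y / nadj x y >-> e3c_adj x y}}.
Proof.
move=> x y fx fy; have [c3 _ _ _] := third_level.
have [xa xb xc] := compE x; have [ya yb yc] := compE y.
have eq_blocks k : k < 3 -> comp x k = comp y k -> block (emb x) k = block (emb y) k.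
  by move=> k3; rewrite !block_emb.
case/or4P.
- case/and4P => /eqP eq1 ne2 _ _; apply: e3c_adj_level.
    by move=> k k3; apply/eq_blocks/eq_comp => // _; rewrite eq1.
  have [/and4P [_ _ _ x3] /and4P [_ _ _ y3]] := conj fx fy.
  by apply: contra ne2 => /eqP/(congr1 (@nat_of_ord 3)); rewrite !vd_emb => /(level_inj x3 y3) ->.
- case/and5P => /eqP l0 /eqP l0' /eqP eq2 /eqP eq3 adj.
  apply: (@e3c_adj_block _ _ _ _ _ a); rewrite ?vd_emb ?l0 ?l0' //.
    by move=> j j3 ja; apply/eq_blocks/eq_comp; rewrite ?(negbTE ja) // => _.
  by rewrite !block_emb // xa ya.
- case/and5P => /eqP l1 /eqP l1' /eqP eq1 /eqP eq3 adj.
  apply: (@e3c_adj_block _ _ _ _ _ b); rewrite ?vd_emb ?l1 ?l1' //.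
    by move=> j j3 jb; apply/eq_blocks/eq_comp; rewrite ?(negbTE jb) // => _.
  by rewrite !block_emb // xb yb.
- case/and5P => /eqP l2 /eqP l2' /eqP eq1 /eqP eq2 adj.
  apply: (@e3c_adj_block _ _ _ _ _ c); rewrite ?vd_emb ?l2 ?l2' //.
    by move=> j j3 jc; apply/eq_blocks/eq_comp; rewrite ?(negbTE jc) // => _.
  by rewrite !block_emb // xc yc.
Qed.

Lemma emb_blocks (X : vertex r s t) l : l < 3 -> level l = vd X ->
  emb (block X a, block X b, block X c, l) = X.
Proof.
set x := (_, _, _, l) => l3 lX; have [c3 _ _ all_k] := third_level.
have fx : fits x by rewrite /shaped /= !size_block !eqxx.
apply: vertexP => [k k3|]; last by apply: ord_inj; rewrite vd_emb.
have [xa xb xc] := compE x.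
by rewrite block_emb //; case/or3P: (all_k k k3) => /eqP ->; rewrite ?xa ?xb ?xc.
Qed.

End Embedding.

Lemma is_path_map r s t (f : nvertex -> vertex r s t) (D : pred nvertex) x y p :
  {in D &, injective f} -> {in D &, {homo f : x y / nadj x y >-> e3c_adj x y}} ->
  path nadj x (p ++ [:: y]) -> uniq (x :: p ++ [:: y]) -> all D (x :: p ++ [:: y]) ->
  is_path (f x) (f y) (map f (x :: p ++ [:: y])).
Proof.
move=> f_inj f_adj p_path p_uniq Dp; split => //.
- by rewrite map_cons last_cons map_cat last_cat.
- by rewrite map_inj_in_uniq // => z z' zp z'p; apply: f_inj; apply: (allP Dp).
- by rewrite map_cons /=; apply: homo_path_in f_adj Dp p_path.
Qed.

Section RoutesInE3C.
Variables (r s t : nat) (u v : vertex r s t).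
Hypotheses (le_rs : r <= s) (le_st : s <= t).
Hypotheses (nA : vA u != vA v) (nB : vB u != vB v) (nC : vC u != vC v) (nd : vd u != vd v).

Local Notation a := (nat_of_ord (vd u)).
Local Notation b := (nat_of_ord (vd v)).
Local Notation c := (3 - a - b).
Local Notation P := (block u a).
Local Notation Q := (block u b).
Local Notation R := (block u c).
Local Notation P' := (block v a).
Local Notation Q' := (block v b).
Local Notation R' := (block v c).

Definition e3c_route (i : nat) : seq (vertex r s t) :=
  map (emb r s t a b) (ends P Q R P' Q' R' (route P Q R P' Q' R' r i)).

Let a3 : a < 3 := ltn_ord _.
Let b3 : b < 3 := ltn_ord _.
Let ab : a != b := nd.

Let blocks_neq k : block u k <> block v k.
Proof. by rewrite /block; case: ifP => _; [|case: ifP => _] => /val_inj; apply/eqP. Qed.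

Let size_blocks k : size (block u k) = size (block v k).
Proof. by rewrite !size_block. Qed.

Let blocks_long k : r <= size (block u k).
Proof. by rewrite size_block blen_ge. Qed.

Let routes_good i : good_route P Q R P' Q' R' (route P Q R P' Q' R' r i).
Proof. by apply: good_route_route => //; first [exact: size_blocks | exact: blocks_neq]. Qed.

Lemma e3c_route_path i :
  is_path u v (e3c_route i) /\ path_length (e3c_route i) <= r + s + t + 6.
Proof.
have [rpath runiq rshape rsize] := routes_good i; rewrite !size_block in rshape rsize.
split; last by rewrite /path_length size_map /= size_cat /= -(blen_sum r s t a3 b3 ab); lia.
have [eu ev] : emb r s t a b (P, Q, R, 0) = u /\ emb r s t a b (P', Q', R', 1) = v.
  by split; apply: emb_blocks.
rewrite /e3c_route /ends -[X in is_path X _ _]eu -[X in is_path _ X _]ev.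
by apply: is_path_map (emb_inj a3 b3 ab) (emb_adj a3 b3 ab) rpath runiq rshape.
Qed.

Lemma e3c_route_disjoint i j : i < r.*2.+2 -> j < r.*2.+2 -> i != j ->
  int_disjoint (e3c_route i) (e3c_route j).
Proof.
move=> lt_i lt_j ne_ij.
have [[_ _ shape_i _] [_ _ shape_j _]] := conj (routes_good i) (routes_good j).
rewrite !size_block in shape_i shape_j.
apply: int_disjoint_map (emb_inj a3 b3 ab) shape_i shape_j _.
by apply: route_disjoint => //; first [exact: size_blocks | exact: blocks_neq].
Qed.

End RoutesInE3C.

Theorem lemma21 (r s t : nat) (u v : vertex r s t) :
  1 <= r -> r <= s -> s <= t ->
  vA u != vA v -> vB u != vB v -> vC u != vC v -> vd u != vd v ->
  exists P : 'I_(2 * r + 2) -> seq (vertex r s t),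
    (forall i, is_path u v (P i) /\ path_length (P i) <= r + s + t + 6) /\
    (forall i j, i != j -> int_disjoint (P i) (P j)).
Proof.
move=> _ le_rs le_st nA nB nC nd.
exists (fun i => e3c_route u v i); split => [i|i j ne_ij].
  exact: e3c_route_path.
have lt_r (k : 'I_(2 * r + 2)) : k < r.*2.+2 by move: (ltn_ord k); lia.
exact: e3c_route_disjoint.
Qed.
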